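(* Let $q$ be a prime power and let $C$ be an $[n,k,d]_q$ Griesmer optimal linear code with $k\ge 3$. Then: (1) if $\Gamma_q(n,k,d)<k$, then $q\mid d$; (2) if $q\nmid d$, then $C$ is a Griesmer code, i.e. $n=g_q(k,d)$.
   Context: An $[n,k,d]_q$ linear code is a $k$-dimensional subspace of $\mathbb{F}_q^n$ with minimum nonzero Hamming weight $d$. Let $g_q(k,d)=\sum_{i=0}^{k-1}\lceil d/q^i\rceil$ (the Griesmer bound says $n\ge g_q(k,d)$ for every $[n,k,d]_q$ code). $C$ is a Griesmer code if $n=g_q(k,d)$, and Griesmer optimal if $n<g_q(k,d+1)$ (so the Griesmer bound rules out an $[n,k,d+1]_q$ code). For a Griesmer optimal $[n,k,d]_q$ code, $\Gamma_q(n,k,d)=k$ if $n=g_q(k,d)$; otherwise $\Gamma_q(n,k,d)$ is the smallest non-negative integer $k_1$ such that $n-g_q(k_1,d)\ge g_q\!\left(k-k_1,\lceil d/q^{k_1}\rceil+1\right)$ (with $g_q(0,\cdot)=0$). *)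

From mathcomp Require Import all_boot all_algebra all_field.
Set Implicit Arguments. Unset Strict Implicit. Unset Printing Implicit Defensive.
Import GRing.Theory.

Definition ceil_div (m p : nat) : nat := (m + p - 1) %/ p.

Definition griesmer_g (q k d : nat) : nat := \sum_(i < k) ceil_div d (q ^ i).

Definition hwt (F : fieldType) (n : nat) (c : 'rV[F]_n) : nat :=
  #|[set i : 'I_n | c ord0 i != 0%R]|.

Definition is_linear_code (F : finFieldType) (n : nat) (C : {vspace 'rV[F]_n})
    (k d : nat) : Prop :=
  [/\ \dim C = k,
      (exists2 c, c \in C & (c != 0%R) /\ hwt c = d) &
      (forall c, c \in C -> c != 0%R -> d <= hwt c)].

Definition griesmer_optimal (q n k d : nat) : Prop := n < griesmer_g q k d.+1.

(* The condition n - g_q(k1,d) >= g_q(k-k1, ceil(d/q^k1)+1), written additively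
   (equivalent over the integers). *)
Definition gamma_cond (q n k d k1 : nat) : bool :=
  griesmer_g q k1 d + griesmer_g q (k - k1) (ceil_div d (q ^ k1)).+1 <= n.

(* Gamma_q(n,k,d): k if n = g_q(k,d), otherwise the least k1 >= 0 satisfying
   gamma_cond (k1 = k always satisfies it, so searching 0..k suffices). *)
Definition Gamma (q n k d : nat) : nat :=
  if n == griesmer_g q k d then k
  else find (gamma_cond q n k d) (iota 0 k.+1).

(** The Griesmer bound [g_q(k,d) <= n] is proved for the weights of a
    [k]-dimensional code restricted to an arbitrary coordinate set [P].  Take a
    nonzero codeword [x] of minimal weight [d' >= d] and a complement [W] of
    [<[x]>] in the code.  For nonzero [y] in [W], summing the weights of the [q]
    codewords [y - a x] gives [q d' <= (q - 1) d' + q wt(y off supp x)], so [W]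
    restricted to the coordinates outside [supp x] has minimum weight at least
    [ceil(d'/q)]; induct using [g_q(k+1,d) = d + g_q(k, ceil(d/q))].
    When [q] does not divide [d], [ceil(d/q^i) = ceil((d+1)/q^i)] for [i >= 1],
    so [g_q(k,d+1) = g_q(k,d) + 1] and Griesmer optimality forces
    [n = g_q(k,d)], whence [Gamma_q(n,k,d) = k]. *)
From mathcomp Require Import all_boot all_algebra all_field.
From mathcomp Require Import zify.
Import GRing.Theory.

Set Implicit Arguments.
Unset Strict Implicit.
Unset Printing Implicit Defensive.

Lemma ceil_div_leq m p c : 0 < p -> (ceil_div m p <= c) = (m <= c * p).
Proof.
move=> p_gt0; rewrite /ceil_div -ltnS -[c.+1]addn1 ltn_divLR //.
by apply/idP/idP; rewrite mulnDl mul1n; lia.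
Qed.

Lemma ceil_div1 m : ceil_div m 1 = m.
Proof. by rewrite /ceil_div addnK divn1. Qed.

Lemma ceil_divA d a b : 0 < a -> 0 < b ->
  ceil_div (ceil_div d a) b = ceil_div d (a * b).
Proof.
move=> a_gt0 b_gt0.
have le_ceil c : (ceil_div (ceil_div d a) b <= c) = (ceil_div d (a * b) <= c).
  by rewrite !ceil_div_leq ?muln_gt0 ?a_gt0 // mulnAC mulnA.
by apply/eqP; rewrite eqn_leq le_ceil leqnn -le_ceil leqnn.
Qed.

Lemma ceil_divSn d p : 0 < p -> ~~ (p %| d) -> ceil_div d.+1 p = ceil_div d p.
Proof.
move=> p_gt0 p_ndvd_d; apply/eqP; rewrite eqn_leq; apply/andP; split.
  rewrite ceil_div_leq //.
  have : d <= ceil_div d p * p by rewrite -ceil_div_leq.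
  rewrite leq_eqVlt => /orP[/eqP d_eq|//].
  by move: p_ndvd_d; rewrite d_eq dvdn_mull.
by apply: leq_div2r; lia.
Qed.

Lemma griesmer_gS q k d : 0 < q ->
  griesmer_g q k.+1 d = d + griesmer_g q k (ceil_div d q).
Proof.
move=> q_gt0; rewrite /griesmer_g big_ord_recl /= expn0 ceil_div1; congr (_ + _).
apply: eq_bigr => i _; rewrite /bump /= add1n expnS ceil_divA //.
by rewrite expn_gt0 q_gt0.
Qed.

Lemma griesmer_gSd q k d : 0 < q -> ~~ (q %| d) ->
  griesmer_g q k.+1 d.+1 = (griesmer_g q k.+1 d).+1.
Proof. by move=> q_gt0 q_ndvd_d; rewrite !griesmer_gS // ceil_divSn. Qed.

Section GriesmerBound.
Variables (F : finFieldType) (n : nat).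

Definition wt_on (P : pred 'I_n) (z : 'rV[F]_n) : nat :=
  \sum_(i | P i) (z ord0 i != 0%R : nat).

Definition off_supp (P : pred 'I_n) (x : 'rV[F]_n) : pred 'I_n :=
  [pred i | P i && (x ord0 i == 0%R)].

Lemma wt_on_predT z : wt_on predT z = hwt z.
Proof.
rewrite /wt_on /hwt -sum1_card [RHS]big_mkcond /=.
by apply: eq_bigr => i _; rewrite inE; case: (_ != 0%R).
Qed.

Lemma card_wt_on_off_supp (P : pred 'I_n) x :
  #|P| = wt_on P x + #|off_supp P x|.
Proof.
rewrite -(cardID [pred i | x ord0 i != 0%R] P); congr (_ + _).
  rewrite -sum1_card /wt_on big_mkcond [RHS]big_mkcond /=.
  by apply: eq_bigr => i _; rewrite !inE unfold_in; case: (P i); case: (_ != 0%R).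
by apply: eq_card => i; rewrite !inE negbK andbC.
Qed.

Lemma sum_affine_neq0 (x y : F) : x != 0%R ->
  \sum_(a : F) ((y - a * x)%R != 0%R : nat) = #|F|.-1.
Proof.
move=> x_neq0; rewrite -(cardC1 (y / x)%R) -sum1_card [RHS]big_mkcond /=.
apply: eq_bigr => a _; rewrite !inE.
have [->|a_neq] := eqVneq a (y / x)%R; first by rewrite divfK // subrr eqxx.
by rewrite subr_eq0 (contraNneq _ a_neq) // => ->; rewrite mulfK.
Qed.

(* Each coordinate of [supp x] contributes to exactly [q - 1] of the [y - a x],
   each coordinate outside [supp x] to all [q] of them. *)
Lemma sum_wt_on_line (P : pred 'I_n) x y :
  \sum_(a : F) wt_on P (y - a *: x)%R =
  wt_on P x * #|F|.-1 + #|F| * wt_on (off_supp P x) y.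
Proof.
have wt_split a : wt_on P (y - a *: x)%R =
    \sum_(i | P i && (x ord0 i != 0%R)) ((y ord0 i - a * x ord0 i)%R != 0%R : nat)
    + wt_on (off_supp P x) y.
  rewrite /wt_on (bigID [pred i | x ord0 i != 0%R]) /=; congr (_ + _).
    by apply: eq_bigr => i _; rewrite !mxE.
  apply: eq_big => [i|i /andP[_]]; first by rewrite negbK.
  by rewrite negbK !mxE => /eqP->; rewrite mulr0 subr0.
rewrite (eq_bigr _ (fun a _ => wt_split a)) big_split sum_nat_const /=.
congr (_ + _); rewrite exchange_big /=.
rewrite (eq_bigr (fun _ => #|F|.-1)) => [|i /andP[_]]; last exact: sum_affine_neq0.
rewrite sum_nat_const -sum1_card; congr (_ * _).
rewrite /wt_on [RHS]big_mkcond [LHS]big_mkcond /=.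
by apply: eq_bigr => i _; rewrite unfold_in; case: (P i); case: (_ != 0%R).
Qed.

Lemma dimv_diff_line (V : {vspace 'rV[F]_n}) x k :
  \dim V = k.+1 -> x \in V -> x != 0%R -> \dim (V :\: <[x]>) = k.
Proof.
move=> dimV xV x_neq0; have sxV : (<[x]> <= V)%VS by rewrite -memvE.
have := dimv_disjoint_sum (capv_diff V <[x]>).
by rewrite addv_diff (addv_idPl sxV) dim_vline x_neq0 dimV addn1; case.
Qed.

Lemma griesmer_bound_on (k : nat) (V : {vspace 'rV[F]_n}) (P : pred 'I_n) d :
  \dim V = k -> (forall y, y \in V -> y != 0%R -> d <= wt_on P y) ->
  griesmer_g #|F| k d <= #|P|.
Proof.
elim: k V P d => [|k IHk] V P d dimV wt_ge; first by rewrite /griesmer_g big_ord0.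
have q_gt0 : 0 < #|F| by apply/card_gt0P; exists 0%R.
pose nonzero_in_V y := (y \in V) && (y != 0%R).
have pickV : nonzero_in_V (vpick V).
  by rewrite /nonzero_in_V memv_pick vpick0 -dimv_eq0 dimV.
have [x /andP[xV x_neq0] x_min] := arg_minnP (wt_on P) pickV.
have d_le_wt_x : d <= wt_on P x by apply: wt_ge.
rewrite griesmer_gS // (card_wt_on_off_supp P x) leq_add //.
apply: (IHk (V :\: <[x]>)%VS) => [|y yW y_neq0]; first exact: dimv_diff_line.
have yV : y \in V by apply: subvP yW; apply: diffvSl.
have line_neq0 a : (y - a *: x)%R != 0%R.
  apply: contra y_neq0; rewrite subr_eq0 => /eqP y_eq.
  by rewrite -memv0 -(capv_diff V <[x]>) memv_cap yW y_eq memvZ ?memv_line.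
have sum_ge : #|F| * wt_on P x <= \sum_(a : F) wt_on P (y - a *: x)%R.
  rewrite -sum_nat_const; apply: leq_sum => a _; apply: x_min.
  by rewrite /nonzero_in_V line_neq0 andbT memvB ?memvZ.
by move: sum_ge d_le_wt_x; rewrite sum_wt_on_line ceil_div_leq //; nia.
Qed.

End GriesmerBound.

Lemma griesmer_bound (F : finFieldType) n (C : {vspace 'rV[F]_n}) k d :
  is_linear_code C k d -> griesmer_g #|F| k d <= n.
Proof.
case=> dimC _ wt_ge; rewrite -[n]card_ord.
apply: (griesmer_bound_on (P := predT) dimC) => // y yC y_neq0.
by rewrite wt_on_predT; apply: wt_ge.
Qed.

Theorem lemma5 (F : finFieldType) (q n k d : nat) (C : {vspace 'rV[F]_n}) :
  #|F| = q ->
  is_linear_code C k d ->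
  griesmer_optimal q n k d ->
  3 <= k ->
  (Gamma q n k d < k -> q %| d) /\ (~~ (q %| d) -> n = griesmer_g q k d).
Proof.
move=> <- codeC opt k_ge3.
have q_gt0 : 0 < #|F| by apply/card_gt0P; exists 0%R.
have griesmer_code : ~~ (#|F| %| d) -> n = griesmer_g #|F| k d.
  move=> q_ndvd_d; apply/eqP; rewrite eqn_leq (griesmer_bound codeC) andbT.
  by case: k k_ge3 opt {codeC} => // k _; rewrite /griesmer_optimal griesmer_gSd.
split=> // Gamma_lt; apply: contraLR Gamma_lt => /griesmer_code n_eq.
by rewrite /Gamma n_eq eqxx ltnn.
Qed.
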